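(* Assume conditions (C1) and (C2) stated in the context. Then the maps \[ (R^\star,R)\mapsto\mathcal G_{R^\star}(R)\qquad\text{and}\qquad(R^\star,R)\mapsto\mathcal L_{R^\star}(R)-\mathcal L_{R^\star}(R^\star) \] are continuous on $\mathcal F_{\mathcal P}^2$ (with the product topology of $\|\cdot\|_{\infty,\mathrm{supp}(\pi_0)}$).
   Context: $\mathcal X$ is a measurable space with distribution $d_0$; $\mathcal A$ is a separable metric space; $\pi_0:\mathcal X\to\Delta(\mathcal A)$ a Markov kernel, $S_x:=\mathrm{supp}(\pi_0(\cdot\mid x))$ its topological support, $\|f\|_{\infty,\mathrm{supp}(\pi_0)}:=\sup\{|f(x,a)|:x\in\mathcal X,a\in S_x\}$. A fixed measurable tie-breaking rule assigns to each measurable reward $R$ a measurable $a_R$ with $a_R(x)\in\arg\max_{a\in S_x}R(x,a)$. $\mathcal P$ is a set; each $p$ induces a $\pi_0$-centered (i.e. $\int R_p(x,a)\pi_0(da\mid x)=0$ for all $x$) measurable reward $R_p$; $\mathcal F_{\mathcal P}:=\{R_p:p\in\mathcal P\}$. (C1) $\mathcal F_{\mathcal P}$ is compact under $\|\cdot\|_{\infty,\mathrm{supp}(\pi_0)}$, and every $R\in\mathcal F_{\mathcal P}$ has $a\mapsto R(x,a)$ continuous on $S_x$ for $d_0$-a.e. $x$. (C2) There is $\Delta^{\mathcal P}_{\min}>0$ such that for every $p$, $d_0$-a.s., $a_{R_p}(X)$ is the unique maximizer and $R_p(X,a_{R_p}(X))-\sup_{a\in S_X,a\ne a_{R_p}(X)}R_p(X,a)\ge\Delta^{\mathcal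 P}_{\min}$. $K\ge2$; $\mathbf v_R(x,\mathbf a)=(R(x,a_1),\dots,R(x,a_K))$; $P_R(y=k\mid x,\mathbf a)=e^{R(x,a_k)}/\sum_\ell e^{R(x,a_\ell)}$; $\ell(\mathbf v,y)=\log\sum_ke^{v_k}-v_y$. For a truth reward $R^\star\in\mathcal F_{\mathcal P}$: $\mathcal G_{R^\star}(R):=\mathbb E_{X\sim d_0}[R^\star(X,a_{R^\star}(X))-R^\star(X,a_R(X))]$ and $\mathcal L_{R^\star}(R):=\mathbb E[\ell(\mathbf v_R(X,\mathbf A),Y)]$ with $X\sim d_0$, $\mathbf A\sim\pi_0(\cdot\mid X)^{\otimes K}$, $Y\sim P_{R^\star}(\cdot\mid X,\mathbf A)$. *)

From HB Require Import structures.
From mathcomp Require Import all_boot all_order all_algebra.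
From mathcomp Require Import all_classical all_reals all_analysis.
Set Implicit Arguments. Unset Strict Implicit. Unset Printing Implicit Defensive.
Import Order.TTheory GRing.Theory Num.Theory.
Import numFieldNormedType.Exports.
Local Open Scope classical_set_scope.
Local Open Scope ring_scope.

Notation borelT A := (g_sigma_algebraType (@open A)).

Section Defs.
Context {R : realType} {dX : measure_display} {X : measurableType dX}
  {A : pseudoPMetricType R}.

Definition tsupp (mu : {measure set (borelT A) -> \bar R}) : set A :=
  [set a | forall U : set A, open U -> U a -> (0 < mu U)%E].

Definition supnorm (S : X -> set A) (f : X -> A -> R) : \bar R :=
  ereal_sup [set y | exists x a, S x a /\ y = (`|f x a|)%:E].

Definition fsub (f g : X -> A -> R) : X -> A -> R := fun x a => f x a - g x a.

Definition supopen (S : X -> set A) (U : set (X -> A -> R)) :=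
  forall f, U f -> exists2 e : R, 0 < e &
    forall g, (supnorm S (fsub g f) < e%:E)%E -> U g.

Definition supcompact (S : X -> set A) (F : set (X -> A -> R)) :=
  forall (I : Type) (U : I -> set (X -> A -> R)),
    (forall i, supopen S (U i)) -> F `<=` \bigcup_(i in setT) U i ->
    exists2 J : set I, finite_set J & F `<=` \bigcup_(i in J) U i.

(* iterated integral over K i.i.d. draws from mu (K-fold product) *)
Fixpoint iint (n : nat) (mu : {measure set (borelT A) -> \bar R})
    (f : seq A -> \bar R) : \bar R :=
  match n with
  | 0 => f [::]
  | n'.+1 => (\int[mu]_(a in setT) iint n' mu (fun s => f (a :: s)))%E
  end.

Definition vR (Rf : X -> A -> R) (x : X) (s : seq A) (k : nat) : R :=
  Rf x (nth point s k).

Definition lse (K : nat) (v : nat -> R) : R := ln (\sum_(k < K) expR (v k)).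
Definition loss (K : nat) (v : nat -> R) (y : nat) : R := lse K v - v y.
(* Bradley-Terry / Plackett-Luce choice probability P(y = k | x, a) *)
Definition softmax (K : nat) (v : nat -> R) (y : nat) : R :=
  expR (v y) / \sum_(l < K) expR (v l).

(* L_{Rs}(Rf) = E[ l(v_Rf(X,A), Y) ],  X ~ d0, A ~ pi0(.|X)^{(x)K}, Y ~ P_Rs *)
Definition Lrisk (d0 : probability X R) (pi0 : R.-pker X ~> borelT A) (K : nat)
    (Rs Rf : X -> A -> R) : \bar R :=
  (\int[d0]_(x in setT) iint K (pi0 x)
     (fun s => (\sum_(k < K) softmax K (vR Rs x s) k
                              * loss K (vR Rf x s) k)%:E))%E.

Definition Gap (d0 : probability X R) (tb : (X -> A -> R) -> X -> A)
    (Rs Rf : X -> A -> R) : \bar R :=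
  (\int[d0]_(x in setT) (Rs x (tb Rs x) - Rs x (tb Rf x))%:E)%E.

End Defs.

(* Both functionals are locally Lipschitz for the sup-distance on the supports
   of pi0, with constants depending only on the sup-norms of the rewards
   involved; only the finiteness of these sup-norms is used, not the
   compactness or continuity in (C1).
   For the regret: by the margin condition (C2), perturbing the truth and the
   candidate by less than Dmin/2 on the supports does not change the
   tie-broken maximizers d0-a.s., so the regret integrand moves by at most
   twice the perturbation.
   For the log-loss: the cross entropy between softmax(u) and the scores w is
   Lipschitz in (u, w), because a perturbation of size t changes softmax
   weights by a factor at most exp(2t).  As A is separable, pi0(.|x) is
   concentrated on its support, so the K-fold integral inherits the bound. *)

From HB Require Import structures.
From mathcomp Require Import all_boot all_order all_algebra.
From mathcomp Require Import all_classical all_reals all_analysis.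
From mathcomp Require Import measurable_realfun lebesgue_integral kernel.
From mathcomp Require Import ring lra.
Set Implicit Arguments. Unset Strict Implicit. Unset Printing Implicit Defensive.
Import Order.TTheory GRing.Theory Num.Theory.
Import numFieldNormedType.Exports.
Local Open Scope classical_set_scope.
Local Open Scope ring_scope.

Lemma ae_tsupp (R : realType) (A : pseudoPMetricType R)
  (A_separable : exists D : set A, countable D /\ dense D)
  (mu : {measure set (borelT A) -> \bar R}) :
  {ae mu, forall a, tsupp mu a}.
Proof.
case: A_separable => D [/countable_injP [f finj] Ddense].
pose r (m : nat) : R := m.+1%:R^-1.
pose null_ball n m (U : set A) := [/\ open U, mu U = 0%E &
   exists d, [/\ D d, f d = n & ball d (r m) `<=` U]].
(* [E n m] is a null open set containing the ball of radius [r m] around the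
   [n]-th point of [D], if there is one; every point outside the support lies
   in one of these countably many null sets. *)
pose E n m : set A := if pselect (exists U, null_ball n m U) is left h
  then projT1 (cid h) else set0.
have aeE n m : {ae mu, forall a, ~ E n m a}.
  exists (E n m); rewrite /E; case: pselect => [h|_]; last first.
    by split => // a /contrapT.
  case: (cid h) => U [oU mU _] /=; split => //; first exact: sub_sigma_algebra.
  by move=> a /= /contrapT.
have := ae_foralln (fun n => ae_foralln (aeE n)).
apply: filterS => a notE U oU Ua.
rewrite lt0e measure_ge0 andbT; apply/eqP => mU0.
have /nbhs_ballP [e e0 eU] : nbhs a U by apply: open_nbhs_nbhs.
have [m _ /(_ m (leqnn _)) rm] :=
  near_infty_natSinv_lt (PosNum (divr_gt0 e0 (ltr0Sn R 1))).
have [d [/interior_subset ad Dd]] : ((ball a (r m))° `&` D) !=set0.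
  apply: Ddense; last exact: open_interior.
  by exists a; apply: nbhsx_ballx; rewrite invr_gt0.
have dU : ball d (r m) `<=` U.
  move=> y dy; apply: eU; apply: (@le_ball _ _ _ (r m + r m)).
    rewrite -mulr2n -mulr_natr -ler_pdivlMr ?ltr0Sn //; exact: ltW.
  exact: ball_triangle ad dy.
have ex : exists U, null_ball (f d) m U by exists U; split => //; exists d.
apply: (notE (f d) m); rewrite /E; case: pselect => [h|//].
case: (cid h) => V [_ _ [d' [Dd' fd' d'V]]] /=.
have d'd : d' = d by apply: finj; rewrite ?inE.
by apply: d'V; rewrite d'd; apply: ball_sym.
Qed.

Local Open Scope ereal_scope.

Section kernel_fst.
Context d d' dB (Z : measurableType d) (Y : measurableType d')
  (B : measurableType dB) (R : realType) (k : R.-pker Z ~> Y).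

Definition kfst (zb : Z * B) : {measure set Y -> \bar R} := k zb.1.

Lemma measurable_kfst U : measurable U -> measurable_fun [set: Z * B] (kfst ^~ U).
Proof. by move=> mU; exact: measurableT_comp (measurable_kernel k U mU) measurable_fst. Qed.

HB.instance Definition _ := isKernel.Build _ _ _ _ R kfst measurable_kfst.

Lemma kfst_setT zb : kfst zb [set: Y] = 1.
Proof. exact: prob_kernel. Qed.

HB.instance Definition _ := Kernel_isProbability.Build _ _ _ _ R kfst kfst_setT.

End kernel_fst.
Arguments kfst {d d' dB Z Y} B {R} k.

Section iterated_integral.
Context (R : realType) (A : pseudoPMetricType R).

(* [measurable_integrands n h]: all the integrands met while unfolding
   [iint n (k z) (h z)] are jointly measurable in the parameter [z] and the
   variables already integrated out. *)
Fixpoint measurable_integrands (n : nat) :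
    forall d (Z : measurableType d), (Z -> seq A -> \bar R) -> Prop :=
  if n is n'.+1 then fun d Z h =>
    @measurable_integrands n' _ (Z * borelT A)%type
      (fun za s => h za.1 (za.2 :: s))
  else fun d Z h => measurable_fun [set: Z] (fun z => h z [::]).
Arguments measurable_integrands n {d Z} h.

Lemma iint_ge0 n (mu : {measure set (borelT A) -> \bar R}) f :
  (forall s, 0 <= f s) -> 0 <= iint n mu f.
Proof.
elim: n f => [|n IH] f f0 /=; first exact: f0.
by apply: integral_ge0 => a _; apply: IH.
Qed.

Lemma iint0 n (mu : {measure set (borelT A) -> \bar R}) :
  iint n mu (fun _ => 0) = 0.
Proof. elim: n => [|n IH] //=; under eq_integral do rewrite IH; exact: integral0. Qed.

Lemma measurable_integrands0 n d (Z : measurableType d) :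
  measurable_integrands n (fun (_ : Z) (_ : seq A) => 0).
Proof. by elim: n d Z => [|n IH] d Z /=; [exact: measurable_cst|exact: IH]. Qed.

Lemma measurable_iint n d (Z : measurableType d) (k : R.-pker Z ~> borelT A)
    (h : Z -> seq A -> \bar R) :
  (forall z s, 0 <= h z s) -> measurable_integrands n h ->
  measurable_fun [set: Z] (fun z => iint n (k z) (h z)).
Proof.
elim: n d Z k h => [|n IH] d Z k h h0 /= mh; first exact: mh.
apply: (measurable_fun_integral_finite_kernel
  (fun za : Z * borelT A => iint n (k za.1) (fun s => h za.1 (za.2 :: s))) k).
- by move=> za; apply: iint_ge0.
- exact: (IH _ _ (kfst (borelT A) k) _ (fun _ _ => h0 _ _)).
Qed.

Lemma iint_le_supp n d (Z : measurableType d) (k : R.-pker Z ~> borelT A)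
    (S : Z -> set A) (h1 h2 : Z -> seq A -> \bar R) (c : R) :
  (0 <= c)%R -> (forall z, {ae k z, forall a, S z a}) ->
  (forall z s, 0 <= h1 z s) -> (forall z s, 0 <= h2 z s) ->
  measurable_integrands n h1 -> measurable_integrands n h2 ->
  forall z, (forall s, size s = n -> (forall i, (i < n)%N -> S z (nth point s i)) ->
                       h1 z s <= h2 z s + c%:E) ->
  iint n (k z) (h1 z) <= iint n (k z) (h2 z) + c%:E.
Proof.
elim: n d Z k S h1 h2 => [|n IH] d Z k S h1 h2 c0 Sae h10 h20 mh1 mh2 z h12 /=.
  exact: h12.
have mI h : (forall z s, 0 <= h z s) -> measurable_integrands n.+1 h ->
    measurable_fun [set: borelT A] (fun a => iint n (k z) (fun s => h z (a :: s))).
  move=> h0 mh.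
  exact: measurableT_comp
    (@measurable_iint n _ _ (kfst (borelT A) k) _ (fun _ _ => h0 _ _) mh)
    (pair1_measurable z).
have ae_filter := @ae_filter_ringOfSetsType _ _ R (k z).
apply: (@le_trans _ _
  (\int[k z]_a (iint n (k z) (fun s => h2 z (a :: s)) + c%:E))).
  apply: ae_ge0_le_integral => //.
  - by move=> a _; apply: iint_ge0.
  - exact: mI h1 h10 mh1.
  - by move=> a _; apply: adde_ge0; [apply: iint_ge0|rewrite lee_fin].
  - by apply: emeasurable_funD; [exact: mI h2 h20 mh2|exact: measurable_cst].
  apply: filterS (Sae z) => a Sa _.
  apply: (IH _ _ (kfst (borelT A) k) (fun za => S za.1) _ _ c0 (fun za => Sae za.1)
    (fun _ _ => h10 _ _) (fun _ _ => h20 _ _) mh1 mh2 (z, a)).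
  move=> s sz Ss; apply: h12; first by rewrite /= sz.
  by case=> [|i] //= /Ss.
rewrite ge0_integralD //; first by rewrite integral_cst // prob_kernel mule1.
- by move=> a _; apply: iint_ge0.
- exact: mI h2 h20 mh2.
Qed.

End iterated_integral.
Arguments measurable_integrands {R A} n {d Z} h.

Section parametric_integrands.
Context (R : realType) (A : pseudoPMetricType R) (dX : measure_display)
  (X : measurableType dX) (H : X -> seq A -> \bar R).
Hypothesis measurable_H :
  forall d (Z : measurableType d) (xz : Z -> X) (s : Z -> seq A),
  measurable_fun [set: Z] xz ->
  (forall i, measurable_fun [set: Z] (fun z => nth point (s z) i : borelT A)) ->
  measurable_fun [set: Z] (fun z => H (xz z) (s z)).

Lemma measurable_integrands_cat n d (Z : measurableType d) (xz : Z -> X)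
    (pre : Z -> seq A) m :
  (forall z, size (pre z) = m) -> measurable_fun [set: Z] xz ->
  (forall i, measurable_fun [set: Z] (fun z => nth point (pre z) i : borelT A)) ->
  measurable_integrands n (fun z s => H (xz z) (pre z ++ s)).
Proof.
elim: n d Z xz pre m => [|n IH] d Z xz pre m sz mxz mpre /=.
  by under eq_fun do rewrite cats0; exact: measurable_H.
under [X in measurable_integrands n X]eq_fun do under eq_fun do rewrite -cat_rcons.
apply: (IH _ (Z * borelT A)%type (fun za => xz za.1) (fun za => rcons (pre za.1) za.2) m.+1).
- by move=> za; rewrite size_rcons sz.
- exact: measurableT_comp mxz measurable_fst.
move=> i; under eq_fun do rewrite nth_rcons sz.
case: (ltngtP i m) => [im|mi|im].
- exact: measurableT_comp (mpre i) measurable_fst.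
- exact: measurable_cst.
- exact: measurable_snd.
Qed.

Lemma measurable_integrands_param n : measurable_integrands n H.
Proof.
have := @measurable_integrands_cat n _ X id (fun _ => [::]) 0%N (fun _ => erefl).
by apply => // i; exact: measurable_cst.
Qed.

End parametric_integrands.

Lemma integral_ae_le_addr d (T : measurableType d) (R : realType)
    (mu : probability T R) (f g : T -> \bar R) (c : R) :
  measurable_fun setT f -> measurable_fun setT g ->
  (forall x, 0 <= f x) -> (forall x, 0 <= g x) -> (0 <= c)%R ->
  {ae mu, forall x, f x <= g x + c%:E} ->
  \int[mu]_x f x <= \int[mu]_x g x + c%:E.
Proof.
move=> mf mg f0 g0 c0 fg.
have ae_filter := @ae_filter_ringOfSetsType _ _ R mu.
apply: (@le_trans _ _ (\int[mu]_x (g x + c%:E))).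
  apply: ae_ge0_le_integral => //.
  - by move=> x _; apply: adde_ge0; rewrite ?lee_fin.
  - by apply: emeasurable_funD; [exact: mg|exact: measurable_cst].
  - by apply: filterS fg => x + _.
rewrite ge0_integralD // integral_cst //.
by rewrite [X in _ * X](_ : _ = 1) ?mule1 //; exact: probability_setT.
Qed.

Lemma integral_bounded_fin_num d (T : measurableType d) (R : realType)
    (mu : probability T R) (f : T -> \bar R) (C : R) :
  measurable_fun setT f -> (forall x, 0 <= f x) -> (forall x, f x <= C%:E) ->
  \int[mu]_x f x \is a fin_num.
Proof.
move=> mf f0 fC; rewrite ge0_fin_numE; last exact: integral_ge0.
apply: le_lt_trans (ltry C).
have C0 : (0 <= C)%R by rewrite -lee_fin; exact: le_trans (f0 point) (fC point).
have := @integral_ae_le_addr _ _ _ mu f (fun _ => 0) C mf (measurable_cst _) f0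
  (fun _ => lexx _) C0.
by rewrite integral0 add0e; apply; apply: aeW.
Qed.

Lemma dist_fine_integral_le d (T : measurableType d) (R : realType)
    (mu : probability T R) (f g : T -> \bar R) (C c : R) :
  measurable_fun setT f -> measurable_fun setT g ->
  (forall x, 0 <= f x) -> (forall x, 0 <= g x) ->
  (forall x, f x <= C%:E) -> (forall x, g x <= C%:E) -> (0 <= c)%R ->
  {ae mu, forall x, f x <= g x + c%:E} -> {ae mu, forall x, g x <= f x + c%:E} ->
  (`| fine (\int[mu]_x f x) - fine (\int[mu]_x g x) | <= c)%R.
Proof.
move=> mf mg f0 g0 fC gC c0 fg gf.
have /fineK Ef := integral_bounded_fin_num mu mf f0 fC.
have /fineK Eg := integral_bounded_fin_num mu mg g0 gC.
have := integral_ae_le_addr mf mg f0 g0 c0 fg.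
have := integral_ae_le_addr mg mf g0 f0 c0 gf.
rewrite -Ef -Eg -!EFinD !lee_fin => gfc fgc.
by rewrite ler_norml; apply/andP; split; lra.
Qed.

Local Close Scope ereal_scope.

Lemma expR_2x_sub1_le (R : realType) (t : R) :
  0 <= t -> t <= 1/4 -> expR (2 * t) - 1 <= 4 * t.
Proof.
move=> t0 t1.
have E0 := expR_gt0 (2 * t).
have : expR (2 * t) * (1 - 2 * t) <= expR (2 * t) * expR (- (2 * t)).
  by apply: ler_wpM2l; [exact: ltW|have := expR_ge1Dx (- (2 * t)); lra].
rewrite -expRD subrr expR0; nra.
Qed.

Section softmax.
Context (R : realType) (K : nat) (K_gt0 : (0 < K)%N).
Implicit Types (u v w : nat -> R) (t M : R).

Lemma sumexp_gt0 v : 0 < \sum_(l < K) expR (v l).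
Proof.
by rewrite (bigD1 (Ordinal K_gt0)) //= ltr_pwDl ?expR_gt0 // sumr_ge0.
Qed.

Lemma lse_le v v' t :
  (forall k, (k < K)%N -> v' k <= v k + t) -> lse K v' <= lse K v + t.
Proof.
move=> v'v; rewrite /lse -[t in _ + t]expRK -lnM ?posrE ?sumexp_gt0 ?expR_gt0 //.
rewrite ler_ln ?posrE ?mulr_gt0 ?sumexp_gt0 ?expR_gt0 // mulr_suml.
by apply: ler_sum => i _; rewrite -expRD ler_expR; exact: v'v.
Qed.

Lemma lse_lipschitz v v' t :
  (forall k, (k < K)%N -> `|v' k - v k| <= t) -> `|lse K v' - lse K v| <= t.
Proof.
move=> vv'; have le_t k : (k < K)%N -> v' k <= v k + t /\ v k <= v' k + t.
  by move=> kK; move: (vv' k kK); rewrite ler_norml => /andP[]; split; lra.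
have := lse_le (fun k kK => (le_t k kK).1).
have := lse_le (fun k kK => (le_t k kK).2).
by rewrite ler_norml => ? ?; apply/andP; split; lra.
Qed.

Lemma lse0 : lse K (fun=> 0 : R) = ln K%:R.
Proof. by rewrite /lse expR0 sumr_const card_ord. Qed.

Lemma softmax_ge0 u k : 0 <= softmax K u k.
Proof. by rewrite /softmax divr_ge0 ?expR_ge0 // ltW // sumexp_gt0. Qed.

Lemma sum_softmax u : \sum_(k < K) softmax K u k = 1.
Proof. by rewrite /softmax -mulr_suml divff // gt_eqF // sumexp_gt0. Qed.

Lemma softmax_le u u' t k : (k < K)%N ->
  (forall k, (k < K)%N -> `|u' k - u k| <= t) ->
  softmax K u' k <= expR (2 * t) * softmax K u k.
Proof.
move=> kK uu'; have le_t l : (l < K)%N -> u' l <= u l + t /\ u l <= u' l + t.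
  by move=> lK; move: (uu' l lK); rewrite ler_norml => /andP[]; split; lra.
have num : expR (u' k) <= expR t * expR (u k).
  by rewrite -expRD ler_expR addrC; exact: (le_t k kK).1.
have den : \sum_(l < K) expR (u l) <= expR t * \sum_(l < K) expR (u' l).
  rewrite mulr_sumr; apply: ler_sum => l _; rewrite -expRD ler_expR addrC.
  exact: (le_t l (ltn_ord l)).2.
rewrite /softmax ler_pdivrMr ?sumexp_gt0 //.
move: (sumexp_gt0 u) den; set S := \sum_(l < K) _; set S' := \sum_(l < K) _.
move=> S_gt0 den.
have -> : expR (2 * t) * (expR (u k) / S) * S' = expR t * expR (u k) * (expR t * S' / S).
  by rewrite (_ : 2 * t = t + t) ?expRD; ring.
apply: le_trans num _; rewrite ler_peMr ?mulr_ge0 ?expR_ge0 //.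
by rewrite ler_pdivlMr // mul1r.
Qed.

Lemma loss_ge0 w k : (k < K)%N -> 0 <= loss K w k.
Proof.
move=> kK; rewrite /loss /lse subr_ge0 -{1}(expRK (w k)).
rewrite ler_ln ?posrE ?expR_gt0 ?sumexp_gt0 // (bigD1 (Ordinal kK)) //=.
by rewrite lerDl sumr_ge0 // => i _; exact: expR_ge0.
Qed.

Definition xent u w := \sum_(k < K) softmax K u k * loss K w k.

Lemma xent_ge0 u w : 0 <= xent u w.
Proof. by apply: sumr_ge0 => k _; rewrite mulr_ge0 ?softmax_ge0 ?loss_ge0. Qed.

Lemma xentE u w : xent u w = lse K w - \sum_(k < K) softmax K u k * w k.
Proof.
rewrite /xent /loss; under eq_bigr do rewrite mulrBr.
by rewrite sumrB -mulr_suml sum_softmax mul1r.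
Qed.

Lemma xent_le u w (B : R) : (forall k, (k < K)%N -> `|w k| <= B) ->
  xent u w <= ln K%:R + 2 * B.
Proof.
move=> wB; rewrite xentE.
have : lse K w <= lse K (fun=> 0 : R) + B.
  by apply: lse_le => k /wB; rewrite add0r ler_norml => /andP[].
have : - \sum_(k < K) softmax K u k * w k <= B.
  rewrite -sumrN -[B]mul1r -(sum_softmax u) mulr_suml; apply: ler_sum => k _.
  rewrite -mulrN ler_wpM2l ?softmax_ge0 //.
  by move: (wB k (ltn_ord k)); rewrite ler_norml => /andP[]; lra.
by rewrite lse0; lra.
Qed.

Lemma dist_softmax_le u u' t k : (k < K)%N ->
  (forall k, (k < K)%N -> `|u' k - u k| <= t) ->
  `|softmax K u' k - softmax K u k| <=
    (expR (2 * t) - 1) * (softmax K u k + softmax K u' k).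
Proof.
move=> kK uu'; have u'u l : (l < K)%N -> `|u l - u' l| <= t.
  by move=> lK; rewrite distrC; exact: uu'.
have := softmax_le kK uu'; have := softmax_le kK u'u.
have := softmax_ge0 u k; have := softmax_ge0 u' k.
have := expR_gt0 (2 * t).
by move=> *; rewrite ler_norml; apply/andP; split; nra.
Qed.

Lemma dist_softmax_mean_le u u' w w' t M : 0 <= t ->
  (forall k, (k < K)%N -> `|u' k - u k| <= t) ->
  (forall k, (k < K)%N -> `|w' k - w k| <= t) ->
  (forall k, (k < K)%N -> `|w k| <= M) ->
  `|\sum_(k < K) softmax K u' k * w' k - \sum_(k < K) softmax K u k * w k|
    <= 2 * (expR (2 * t) - 1) * (M + t) + t.
Proof.
move=> t0 uu' ww' wM; set E := expR (2 * t) - 1.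
have E0 : 0 <= E by rewrite subr_ge0 -expR0 ler_expR mulr_ge0.
rewrite -sumrB; apply: le_trans (ler_norm_sum _ _ _) _.
apply: (@le_trans _ _
  (\sum_(k < K) (E * (M + t) * (softmax K u k + softmax K u' k) + softmax K u k * t))).
  apply: ler_sum => k _.
  have -> : softmax K u' k * w' k - softmax K u k * w k =
    (softmax K u' k - softmax K u k) * w' k + softmax K u k * (w' k - w k) by ring.
  apply: le_trans (ler_normD _ _) _; apply: lerD.
    have w'M : `|w' k| <= M + t.
      move: (ww' k (ltn_ord k)) (wM k (ltn_ord k)).
      by have := ler_normD (w' k - w k) (w k); rewrite subrK; lra.
    rewrite normrM mulrAC; apply: ler_pM => //.
    exact: dist_softmax_le.
  by rewrite normrM ger0_norm ?softmax_ge0 // ler_wpM2l ?softmax_ge0 // ww'.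
rewrite big_split /= -mulr_sumr -mulr_suml big_split /= !sum_softmax //.
lra.
Qed.

Lemma xent_lipschitz u u' w w' t M : 0 <= t -> t <= 1/4 ->
  (forall k, (k < K)%N -> `|u' k - u k| <= t) ->
  (forall k, (k < K)%N -> `|w' k - w k| <= t) ->
  (forall k, (k < K)%N -> `|w k| <= M) ->
  `|xent u' w' - xent u w| <= t * (4 + 8 * M).
Proof.
move=> t0 t1 uu' ww' wM; rewrite !xentE //.
have M0 : 0 <= M by exact: le_trans (normr_ge0 _) (wM 0%N K_gt0).
set m' := \sum_(k < K) _ * w' k; set m := \sum_(k < K) _ * w k.
have -> : lse K w' - m' - (lse K w - m) = (lse K w' - lse K w) - (m' - m) by ring.
apply: le_trans (ler_normB _ _) _.
have := lse_lipschitz ww'; have := dist_softmax_mean_le t0 uu' ww' wM.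
have Mt : 0 <= M + t by lra.
have := ler_wpM2r Mt (expR_2x_sub1_le t0 t1).
have : t * t <= t * (1/4) by exact: ler_wpM2l.
by rewrite -/m -/m'; lra.
Qed.

End softmax.

Lemma measurable_xent (R : realType) d (Z : measurableType d) (K : nat)
    (K_gt0 : (0 < K)%N) (u w : nat -> Z -> R) :
  (forall k, measurable_fun [set: Z] (u k)) ->
  (forall k, measurable_fun [set: Z] (w k)) ->
  measurable_fun [set: Z] (fun z => xent K (u ^~ z) (w ^~ z)).
Proof.
move=> mu mw.
have mlse v : (forall k, measurable_fun [set: Z] (v k)) ->
    measurable_fun [set: Z] (fun z => lse K (v ^~ z)).
  move=> mv; apply: measurableT_comp; first exact: measurable_ln.
  by apply: measurable_sum => l; exact: measurableT_comp (mv l).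
apply: measurable_sum => k; apply: measurable_funM.
  have -> : (fun z => softmax K (u ^~ z) k) =
            (fun z => expR (u k z) * expR (- lse K (u ^~ z))).
    apply/funext => z; rewrite expRN lnK // posrE.
    exact: (sumexp_gt0 K_gt0 (u ^~ z)).
  apply: measurable_funM; first exact: measurableT_comp (mu k).
  by apply: measurableT_comp; [exact: measurable_expR|apply: measurable_funN; exact: mlse].
by apply: measurable_funB; [exact: mlse|exact: mw].
Qed.

Local Open Scope ereal_scope.

Section supnorm.
Context (R : realType) d (X : measurableType d) (A : pseudoPMetricType R)
  (S : X -> set A).

Lemma supnorm_ge (f : X -> A -> R) x a : S x a -> (`|f x a|)%:E <= supnorm S f.
Proof. by move=> Sxa; apply: ereal_sup_ubound; exists x, a. Qed.

Lemma supnorm_lt (f : X -> A -> R) (e : R) x a :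
  supnorm S f < e%:E -> S x a -> (`|f x a| < e)%R.
Proof. by move=> fe Sxa; rewrite -lte_fin; exact: le_lt_trans (supnorm_ge f Sxa) fe. Qed.

Lemma le_fine_supnorm (f : X -> A -> R) x a :
  supnorm S f < +oo -> S x a -> (`|f x a| <= fine (supnorm S f))%R.
Proof.
move=> f_fin Sxa; have fa := supnorm_ge f Sxa.
have : supnorm S f \is a fin_num by rewrite ge0_fin_numE // (le_trans _ fa).
by move/fineK => fK; rewrite -lee_fin fK.
Qed.

End supnorm.

Definition margin (R : realType) (A : Type) (Sx : set A) (f : A -> R) (t : A) : \bar R :=
  (f t)%:E - ereal_sup [set y | exists a, [/\ Sx a, a <> t & y = (f a)%:E]].

Lemma argmax_eq_of_margin (R : realType) (A : Type) (Sx : set A) (f g : A -> R)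
    (t t' : A) (dl Dmin : R) :
  (dl <= Dmin / 2)%R -> Sx t -> Sx t' -> (forall a, Sx a -> g a <= g t')%R ->
  (forall a, Sx a -> `|g a - f a| < dl)%R -> Dmin%:E <= margin Sx f t ->
  t' = t.
Proof.
move=> dlD St St' g_t' gf ft; apply: contrapT => t't.
have : Dmin%:E <= (f t)%:E - (f t')%:E.
  apply: le_trans ft _; apply: leeB => //.
  by apply: ereal_sup_ubound; exists t'.
rewrite -EFinB lee_fin => Dft.
have := g_t' t St; move: (gf t St) (gf t' St').
by rewrite !ltr_norml => /andP[? ?] /andP[? ?]; lra.
Qed.

Local Close Scope ereal_scope.

Section gap.
Context (R : realType) (dX : measure_display) (X : measurableType dX)
  (d0 : probability X R) (A : pseudoPMetricType R) (S : X -> set A)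
  (tb : (X -> A -> R) -> X -> A).

Definition argmax_rule (f : X -> A -> R) :=
  measurable_fun setT (tb f : X -> borelT A) /\
  forall x, S x (tb f x) /\ forall a, S x a -> f x a <= f x (tb f x).

Definition regret (Rs Rf : X -> A -> R) (x : X) : \bar R :=
  (Rs x (tb Rs x) - Rs x (tb Rf x))%:E.

Lemma measurable_regret Rs Rf :
  measurable_fun setT (fun z : X * borelT A => Rs z.1 z.2) ->
  argmax_rule Rs -> argmax_rule Rf -> measurable_fun setT (regret Rs Rf).
Proof.
move=> mRs [mtbs _] [mtbf _]; apply/measurable_EFinP.
by apply: measurable_funB;
  [exact: measurableT_comp mRs (measurable_fun_pair (@measurable_id _ X setT) mtbs)|
   exact: measurableT_comp mRs (measurable_fun_pair (@measurable_id _ X setT) mtbf)].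
Qed.

Lemma regret_ge0 Rs Rf x : argmax_rule Rs -> argmax_rule Rf -> (0 <= regret Rs Rf x)%E.
Proof.
move=> [_ /(_ x)[_ Rs_max]] [_ /(_ x)[Stbf _]].
by rewrite lee_fin subr_ge0; exact: Rs_max.
Qed.

Lemma regret_le Rs Rf (B : R) x : argmax_rule Rs -> argmax_rule Rf ->
  (forall a, S x a -> `|Rs x a| <= B) -> (regret Rs Rf x <= (2 * B)%:E)%E.
Proof.
move=> [_ /(_ x)[Stbs _]] [_ /(_ x)[Stbf _]] RsB.
move: (RsB _ Stbs) (RsB _ Stbf); rewrite lee_fin !ler_norml.
by move=> /andP[? ?] /andP[? ?]; lra.
Qed.

Lemma Gap_lipschitz (Rs Rf Rs' Rf' : X -> A -> R) (B dl Dmin : R) :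
  measurable_fun setT (fun z : X * borelT A => Rs z.1 z.2) ->
  measurable_fun setT (fun z : X * borelT A => Rs' z.1 z.2) ->
  argmax_rule Rs -> argmax_rule Rf -> argmax_rule Rs' -> argmax_rule Rf' ->
  (forall x a, S x a -> `|Rs x a| <= B) -> 0 <= dl <= Dmin / 2 ->
  (forall x a, S x a -> `|Rs' x a - Rs x a| < dl) ->
  (forall x a, S x a -> `|Rf' x a - Rf x a| < dl) ->
  {ae d0, forall x, (Dmin%:E <= margin (S x) (Rs x) (tb Rs x))%E} ->
  {ae d0, forall x, (Dmin%:E <= margin (S x) (Rf x) (tb Rf x))%E} ->
  `|fine (Gap d0 tb Rs' Rf') - fine (Gap d0 tb Rs Rf)| <= 2 * dl.
Proof.
move=> mRs mRs' tbs tbf tbs' tbf' RsB /andP[dl0 dlD] s's f'f margin_s margin_f.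
have Rs'B x a : S x a -> `|Rs' x a| <= B + dl.
  move=> Sxa; move: (s's x a Sxa) (RsB x a Sxa).
  by have := ler_normD (Rs' x a - Rs x a) (Rs x a); rewrite subrK; lra.
have same_argmax f f' : argmax_rule f -> argmax_rule f' ->
    (forall x a, S x a -> `|f' x a - f x a| < dl) ->
    {ae d0, forall x, (Dmin%:E <= margin (S x) (f x) (tb f x))%E} ->
    {ae d0, forall x, tb f' x = tb f x}.
  move=> [_ tbx] [_ tb'x] ff'; apply: filterS => x.
  have [[St _] [St' max']] := (tbx x, tb'x x).
  exact: (argmax_eq_of_margin dlD St St' max' (ff' x)).
have ae_filter := @ae_filter_ringOfSetsType _ _ R d0.
have regret_close : {ae d0, forall x,
    `|fine (regret Rs' Rf' x) - fine (regret Rs Rf x)| <= 2 * dl}.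
  apply: filterS2 (same_argmax _ _ tbs tbs' s's margin_s)
                  (same_argmax _ _ tbf tbf' f'f margin_f) => x es ef.
  rewrite /regret /= es ef.
  have [[Stbs _] [Stbf _]] := (tbs.2 x, tbf.2 x).
  move: (s's x _ Stbs) (s's x _ Stbf); rewrite !ltr_norml.
  by move=> /andP[? ?] /andP[? ?]; rewrite ler_norml; apply/andP; split; lra.
apply: (dist_fine_integral_le (C := 2 * (B + dl)))
  (measurable_regret mRs' tbs' tbf') (measurable_regret mRs tbs tbf) _ _ _ _ _ _ _.
- by move=> x; exact: regret_ge0.
- by move=> x; exact: regret_ge0.
- by move=> x; exact: regret_le (Rs'B x).
- move=> x; apply: le_trans (regret_le tbs tbf (RsB x)) _.
  by rewrite lee_fin; lra.
- by rewrite mulr_ge0.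
- apply: filterS regret_close => x; rewrite /regret /= -EFinD lee_fin.
  by rewrite ler_norml => /andP[? ?]; lra.
- apply: filterS regret_close => x; rewrite /regret /= -EFinD lee_fin.
  by rewrite ler_norml => /andP[? ?]; lra.
Qed.

End gap.

Section log_loss.
Context (R : realType) (dX : measure_display) (X : measurableType dX)
  (d0 : probability X R) (A : pseudoPMetricType R)
  (A_separable : exists D : set A, countable D /\ dense D)
  (pi0 : R.-pker X ~> borelT A) (K : nat) (K_gt0 : (0 < K)%N).
Implicit Types Rs Rf : X -> A -> R.

Let S x := tsupp (pi0 x).

Definition xent_pt Rs Rf x (l : seq A) : \bar R :=
  (xent K (vR Rs x l) (vR Rf x l))%:E.

Lemma measurable_integrands_xent_pt Rs Rf :
  measurable_fun setT (fun z : X * borelT A => Rs z.1 z.2) ->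
  measurable_fun setT (fun z : X * borelT A => Rf z.1 z.2) ->
  measurable_integrands K (xent_pt Rs Rf).
Proof.
move=> mRs mRf; apply: measurable_integrands_param => d Z xz s mxz ms.
apply/measurable_EFinP; apply: measurable_xent => // k.
- exact: measurableT_comp mRs (measurable_fun_pair mxz (ms k)).
- exact: measurableT_comp mRf (measurable_fun_pair mxz (ms k)).
Qed.

Lemma iint_xent_pt_le Rs Rf Rs' Rf' (c : R) x : 0 <= c ->
  measurable_integrands K (xent_pt Rs Rf) ->
  measurable_integrands K (xent_pt Rs' Rf') ->
  (forall l, size l = K -> (forall i, (i < K)%N -> S x (nth point l i)) ->
     `|xent K (vR Rs' x l) (vR Rf' x l) - xent K (vR Rs x l) (vR Rf x l)| <= c) ->
  (iint K (pi0 x) (xent_pt Rs' Rf' x) <= iint K (pi0 x) (xent_pt Rs Rf x) + c%:E)%E.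
Proof.
move=> c0 m m' close.
apply: (@iint_le_supp _ _ K _ X pi0 S _ _ _ c0
  (fun z => ae_tsupp A_separable (pi0 z)) _ _ m' m x).
- by move=> z l; rewrite lee_fin xent_ge0.
- by move=> z l; rewrite lee_fin xent_ge0.
- move=> l Kl Sl; rewrite -EFinD lee_fin.
  by move: (close l Kl Sl); rewrite ler_norml => /andP[_ ?]; lra.
Qed.

Lemma iint_xent_pt_bounded Rs Rf (B : R) x : 0 <= B ->
  measurable_integrands K (xent_pt Rs Rf) ->
  (forall a, S x a -> `|Rf x a| <= B) ->
  (iint K (pi0 x) (xent_pt Rs Rf x) <= (ln K%:R + 2 * B)%:E)%E.
Proof.
move=> B0 m RfB; rewrite -[X in (_ <= X)%E]add0e -(iint0 K (pi0 x)).
apply: (@iint_le_supp _ _ K _ X pi0 S _ _ _ _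
  (fun z => ae_tsupp A_separable (pi0 z)) _ _ m (measurable_integrands0 _ _ _) x).
- by rewrite addr_ge0 ?mulr_ge0 // ln_ge0 // ler1n.
- by move=> z l; rewrite lee_fin xent_ge0.
- by [].
- move=> l Kl Sl; rewrite add0e lee_fin; apply: xent_le => // k kK.
  by apply: RfB; apply: Sl.
Qed.

Lemma Lrisk_lipschitz Rs Rf Rs' Rf' (M dl : R) :
  measurable_fun setT (fun z : X * borelT A => Rs z.1 z.2) ->
  measurable_fun setT (fun z : X * borelT A => Rf z.1 z.2) ->
  measurable_fun setT (fun z : X * borelT A => Rs' z.1 z.2) ->
  measurable_fun setT (fun z : X * borelT A => Rf' z.1 z.2) ->
  0 <= M -> (forall x a, S x a -> `|Rf x a| <= M) -> 0 <= dl <= 1/4 ->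
  (forall x a, S x a -> `|Rs' x a - Rs x a| <= dl) ->
  (forall x a, S x a -> `|Rf' x a - Rf x a| <= dl) ->
  `|fine (Lrisk d0 pi0 K Rs' Rf') - fine (Lrisk d0 pi0 K Rs Rf)| <= dl * (4 + 8 * M).
Proof.
move=> mRs mRf mRs' mRf' M0 RfM /andP[dl0 dl1] s's f'f.
have m := measurable_integrands_xent_pt mRs mRf.
have m' := measurable_integrands_xent_pt mRs' mRf'.
have xent_close x l : (forall i, (i < K)%N -> S x (nth point l i)) ->
    `|xent K (vR Rs' x l) (vR Rf' x l) - xent K (vR Rs x l) (vR Rf x l)|
      <= dl * (4 + 8 * M).
  move=> Sl; apply: xent_lipschitz => // k kK; rewrite /vR.
  - exact: s's (Sl k kK).
  - exact: f'f (Sl k kK).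
  - exact: RfM (Sl k kK).
have Rf'M x a : S x a -> `|Rf' x a| <= M + dl.
  move=> Sxa; move: (f'f x a Sxa) (RfM x a Sxa).
  by have := ler_normD (Rf' x a - Rf x a) (Rf x a); rewrite subrK; lra.
have xent_pt0 Rs1 Rf1 x l : (0 <= xent_pt Rs1 Rf1 x l)%E by rewrite lee_fin xent_ge0.
have c0 : 0 <= dl * (4 + 8 * M) by rewrite mulr_ge0 // addr_ge0 ?mulr_ge0.
apply: (dist_fine_integral_le (C := ln K%:R + 2 * (M + dl))
  (measurable_iint pi0 (xent_pt0 Rs' Rf') m') (measurable_iint pi0 (xent_pt0 Rs Rf) m)
  _ _ _ _ c0 _ _).
- by move=> x; exact: iint_ge0.
- by move=> x; exact: iint_ge0.
- by move=> x; apply: iint_xent_pt_bounded m' (Rf'M x); lra.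
- move=> x; apply: iint_xent_pt_bounded m _ => [|a Sxa]; first lra.
  by have := RfM x a Sxa; lra.
- by apply: aeW => x; apply: iint_xent_pt_le c0 m m' _ => l _; exact: xent_close.
- apply: aeW => x; apply: iint_xent_pt_le c0 m' m _ => l _ Sl.
  by rewrite distrC; exact: xent_close.
Qed.

Lemma excess_Lrisk_lipschitz Rs Rf Rs' Rf' (M N dl : R) :
  measurable_fun setT (fun z : X * borelT A => Rs z.1 z.2) ->
  measurable_fun setT (fun z : X * borelT A => Rf z.1 z.2) ->
  measurable_fun setT (fun z : X * borelT A => Rs' z.1 z.2) ->
  measurable_fun setT (fun z : X * borelT A => Rf' z.1 z.2) ->
  0 <= M -> 0 <= N ->
  (forall x a, S x a -> `|Rf x a| <= M) -> (forall x a, S x a -> `|Rs x a| <= N) ->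
  0 <= dl <= 1/4 ->
  (forall x a, S x a -> `|Rs' x a - Rs x a| < dl) ->
  (forall x a, S x a -> `|Rf' x a - Rf x a| < dl) ->
  `|(fine (Lrisk d0 pi0 K Rs' Rf') - fine (Lrisk d0 pi0 K Rs' Rs'))
     - (fine (Lrisk d0 pi0 K Rs Rf) - fine (Lrisk d0 pi0 K Rs Rs))|
   <= (8 + 8 * (M + N)) * dl.
Proof.
move=> mRs mRf mRs' mRf' M0 N0 RfM RsN dl_ok s's f'f.
have s's_le x a Sxa := ltW (s's x a Sxa); have f'f_le x a Sxa := ltW (f'f x a Sxa).
have := Lrisk_lipschitz mRs mRf mRs' mRf' M0 RfM dl_ok s's_le f'f_le.
have := Lrisk_lipschitz mRs mRs mRs' mRs' N0 RsN dl_ok s's_le s's_le.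
set a' := fine (Lrisk _ _ _ Rs' Rf'); set a := fine (Lrisk _ _ _ Rs Rf).
set b' := fine (Lrisk _ _ _ Rs' Rs'); set b := fine (Lrisk _ _ _ Rs Rs).
move=> db da; have -> : a' - b' - (a - b) = (a' - a) - (b' - b) by ring.
by apply: le_trans (ler_normB _ _) _; lra.
Qed.

End log_loss.

Section sup_continuity.
Context (R : realType) (d : measure_display) (X : measurableType d)
  (A : pseudoPMetricType R) (S : X -> set A) (P : Type) (Rp : P -> X -> A -> R).

Definition sup_continuous2 (F : P -> P -> R) :=
  forall ps p (e : R), 0 < e -> exists2 delta : R, 0 < delta &
    forall qs q, (supnorm S (fsub (Rp qs) (Rp ps)) < delta%:E)%E ->
                 (supnorm S (fsub (Rp q) (Rp p)) < delta%:E)%E ->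
                 `|F qs q - F ps p| < e.

Lemma sup_continuous2_lipschitz (F : P -> P -> R) :
  (forall ps p, exists2 r : R, 0 < r & exists C : R,
     forall (dl : R) qs q, 0 < dl <= r ->
       (forall x a, S x a -> `|Rp qs x a - Rp ps x a| < dl) ->
       (forall x a, S x a -> `|Rp q x a - Rp p x a| < dl) ->
       `|F qs q - F ps p| <= C * dl) ->
  sup_continuous2 F.
Proof.
move=> lip ps p e e0; have [r r0 [C lipC]] := lip ps p.
have C1 : 0 < `|C| + 1 by rewrite ltr_wpDl.
pose k := e / (`|C| + 1); have k0 : 0 < k by rewrite divr_gt0.
have ek : e = `|C| * k + k.
  by rewrite -[X in _ + X]mul1r -mulrDl mulrC /k divfK ?gt_eqF.
exists (Num.min r k) => [|qs q qs_ps q_p]; first by rewrite lt_min r0.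
have dl0 : 0 < Num.min r k by rewrite lt_min r0.
apply: le_lt_trans (lipC _ qs q _ (fun x a => supnorm_lt qs_ps)
  (fun x a => supnorm_lt q_p)) _; first by rewrite dl0 ge_min lexx.
have := ler_wpM2r (ltW dl0) (ler_norm C).
have mk : Num.min r k <= k by rewrite ge_min lexx orbT.
have := ler_wpM2l (normr_ge0 C) mk.
lra.
Qed.

End sup_continuity.

Theorem lemma13 (R : realType) (dX : measure_display) (X : measurableType dX)
  (d0 : probability X R)
  (A : pseudoPMetricType R)
  (A_hausdorff : hausdorff_space A)
  (A_separable : exists D : set A, countable D /\ dense D)
  (pi0 : R.-pker X ~> borelT A)
  (tb : (X -> A -> R) -> X -> A)
  (P : Type) (Rp : P -> X -> A -> R)
  (K : nat) (K_ge2 : (2 <= K)%N) :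
  let S := fun x => tsupp (pi0 x) in
  (* each R_p is a measurable reward *)
  (forall p, measurable_fun setT
      (fun z : X * borelT A => Rp p z.1 z.2)) ->
  (* each R_p is pi0-centered *)
  (forall p x, (\int[pi0 x]_(a in setT) (Rp p x a)%:E = 0)%E) ->
  (* each R_p has finite ||.||_{infty, supp(pi0)} norm *)
  (forall p, (supnorm S (Rp p) < +oo)%E) ->
  (* the fixed tie-breaking rule on F_P *)
  (forall p, measurable_fun setT (tb (Rp p) : X -> borelT A) /\
     forall x, S x (tb (Rp p) x) /\
       forall a, S x a -> Rp p x a <= Rp p x (tb (Rp p) x)) ->
  (* (C1) *)
  supcompact S (range Rp) ->
  (forall p, {ae d0, forall x, {within S x, continuous (Rp p x)}}) ->
  (* (C2) *)
  (exists2 Dmin : R, 0 < Dmin & forall p, {ae d0, forall x,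
     (forall a, S x a -> a <> tb (Rp p) x -> Rp p x a < Rp p x (tb (Rp p) x)) /\
     (Dmin%:E <= (Rp p x (tb (Rp p) x))%:E -
        ereal_sup [set y | exists a, [/\ S x a, a <> tb (Rp p) x &
                                         y = (Rp p x a)%:E]])%E}) ->
  (* continuity on F_P^2 (product topology of the sup-pseudometric) *)
  (forall ps p : P, forall e : R, 0 < e -> exists2 delta : R, 0 < delta &
     forall qs q : P,
       (supnorm S (fsub (Rp qs) (Rp ps)) < delta%:E)%E ->
       (supnorm S (fsub (Rp q) (Rp p)) < delta%:E)%E ->
       `| fine (Gap d0 tb (Rp qs) (Rp q)) - fine (Gap d0 tb (Rp ps) (Rp p)) | < e)
  /\
  (forall ps p : P, forall e : R, 0 < e -> exists2 delta : R, 0 < delta &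
     forall qs q : P,
       (supnorm S (fsub (Rp qs) (Rp ps)) < delta%:E)%E ->
       (supnorm S (fsub (Rp q) (Rp p)) < delta%:E)%E ->
       `| (fine (Lrisk d0 pi0 K (Rp qs) (Rp q)) - fine (Lrisk d0 pi0 K (Rp qs) (Rp qs)))
        - (fine (Lrisk d0 pi0 K (Rp ps) (Rp p)) - fine (Lrisk d0 pi0 K (Rp ps) (Rp ps))) | < e).
Proof.
move=> S mR _ sup_fin tbH _ _ [Dmin Dmin0 C2].
have K_gt0 : (0 < K)%N by exact: leq_trans K_ge2.
pose M p := `|fine (supnorm S (Rp p))|.
have M0 p : 0 <= M p by exact: normr_ge0.
have RpM p x a : S x a -> `|Rp p x a| <= M p.
  by move=> Sxa; exact: le_trans (le_fine_supnorm (sup_fin p) Sxa) (ler_norm _).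
have margin_ae p :
    {ae d0, forall x, (Dmin%:E <= margin (S x) (Rp p x) (tb (Rp p) x))%E}.
  by apply: filterS (C2 p) => x [].
split.
  apply: (@sup_continuous2_lipschitz _ _ _ _ S _ Rp
    (fun ps p => fine (Gap d0 tb (Rp ps) (Rp p)))) => ps p.
  exists (Dmin / 2); first by rewrite divr_gt0.
  exists 2 => dl qs q /andP[dl0 dlD] qs_ps q_p.
  by apply: Gap_lipschitz (mR ps) (mR qs) (tbH ps) (tbH p) (tbH qs) (tbH q)
    (RpM ps) _ qs_ps q_p (margin_ae ps) (margin_ae p); rewrite ltW.
apply: (@sup_continuous2_lipschitz _ _ _ _ S _ Rp (fun ps p =>
  fine (Lrisk d0 pi0 K (Rp ps) (Rp p)) - fine (Lrisk d0 pi0 K (Rp ps) (Rp ps)))).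
move=> ps p; exists (1/4) => //; exists (8 + 8 * (M p + M ps)).
move=> dl qs q /andP[dl0 dl1] qs_ps q_p.
have dl_ok : 0 <= dl <= 1/4 by rewrite ltW.
exact: (excess_Lrisk_lipschitz d0 A_separable K_gt0 (mR ps) (mR p) (mR qs) (mR q)
  (M0 p) (M0 ps) (RpM p) (RpM ps) dl_ok qs_ps q_p).
Qed.
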